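(* Consider $N$ agents whose states stack into $x\in\mathbb{R}^n$, each state coordinate belonging to exactly one agent. Let $A\in\mathbb{R}^{n\times n}$, $W\in\mathbb{R}^{n\times n}$ symmetric positive definite, $C=\mathrm{diag}(C_{11},\dots,C_{nn})$ diagonal positive definite (block-diagonal over agents). For each agent $i$ let $\Delta_{\ell_2}y_i>0$ be the $\ell_2$-sensitivity of its output map, take $\delta_i\in[10^{-5},10^{-1}]$, $\epsilon_i>0$, and set $\sigma_i=\frac{\Delta_{\ell_2}y_i}{2\epsilon_i}\big(K_{\delta_i}+\sqrt{K_{\delta_i}^2+2\epsilon_i}\big)$; let $V$ be the diagonal matrix whose $j$-th diagonal entry is $\sigma_i^2$ for the agent $i$ owning coordinate $j$. Let $\Sigma$ be the unique positive semidefinite solution of $\Sigma=A\Sigma A^T-A\Sigma C^T(C\Sigma C^T+V)^{-1}C\Sigma A^T+W$ and $\overline\Sigma=(C^TV^{-1}C+\Sigma^{-1})^{-1}$ (the MSE matrix of the a posteriori estimates). Let $B_l,B_u$ be real numbers and define, for each $i$, $$\eta_3:=\left(\frac{B_lC_u^2}{(\Delta_{\ell_2}y_i)^2\big(n-B_l\lambda_n^{-1}(W)\big)}\right)^{1/2},\qquad \eta_4:=\left(\frac{B_uC_l^2}{n(\Delta_{\ell_2}y_i)^2}\right)^{1/2},$$ assumed to be positive real numbers. If for all $i$ $$\frac18\left(\frac{1+\sqrt{36\eta_4+1}}{\eta_4}\right)^2\le\epsilon_i\le\frac1{\eta_3},$$ then $B_l\le\mathrm{tr}\,\overline\Sigma\le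 B_u$.
   Context: $\mathcal{Q}(y)=\frac{1}{\sqrt{2\pi}}\int_y^\infty e^{-z^2/2}dz$ and $K_\delta=\mathcal{Q}^{-1}(\delta)$. $\lambda_n(\cdot)$ is the smallest eigenvalue. With $V_{jj}=\sigma_j^2$ the noise variance of coordinate $j$, $l=\arg\min_j C_{jj}^2/\sigma_j^2$, $u=\arg\max_j C_{jj}^2/\sigma_j^2$, $C_l=C_{ll}$, $C_u=C_{uu}$. The $\ell_2$-sensitivity of agent $i$'s output $y_i(k)=C_ix_i(k)$ is $\sup\|C_ix_i-C_ix_i'\|_{\ell_2}$ over state trajectories with $\|x_i-x_i'\|_{\ell_2}\le b_i$ for a given adjacency parameter $b_i>0$. *)

From HB Require Import structures.
From mathcomp Require Import all_boot all_order all_algebra.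
From mathcomp Require Import all_classical all_reals all_analysis.
Set Implicit Arguments. Unset Strict Implicit. Unset Printing Implicit Defensive.
Import Order.TTheory GRing.Theory Num.Theory.
Import numFieldNormedType.Exports.
Local Open Scope classical_set_scope.
Local Open Scope ring_scope.

Definition Qfun (R : realType) (y : R) : R :=
  (Num.sqrt (2 * pi))^-1 *
  fine (\int[@lebesgue_measure R]_(z in `[y, +oo[%classic) (expR (- (z ^+ 2) / 2))%:E).

Definition psd (R : realType) n (M : 'M[R]_n) : Prop :=
  M^T = M /\ forall v : 'cV[R]_n, 0 <= (v^T *m M *m v) 0 0.
Definition pd (R : realType) n (M : 'M[R]_n) : Prop :=
  M^T = M /\ forall v : 'cV[R]_n, v != 0 -> 0 < (v^T *m M *m v) 0 0.

Definition is_min_eigenvalue (R : realType) n (M : 'M[R]_n) (lam : R) : Prop :=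
  eigenvalue M lam /\ forall a : R, eigenvalue M a -> lam <= a.

Definition l2sq_agent (R : realType) n N (owner : 'I_n -> 'I_N) (i : 'I_N)
  (d : nat -> 'I_n -> R) : \bar R :=
  (\sum_(0 <= k <oo) (\sum_(j | owner j == i) (d k j) ^+ 2)%:E)%E.

(* l2-sensitivity of y_i(k) = C_i x_i(k) with C = diag(c), adjacency b:
   sup ||C_i x_i - C_i x_i'||_{l2}  over  ||x_i - x_i'||_{l2} <= b *)
Definition sensitivity (R : realType) n N (owner : 'I_n -> 'I_N) (c : 'I_n -> R)
  (b : R) (i : 'I_N) : R :=
  Num.sqrt (fine (ereal_sup
    [set r : \bar R | exists (x x' : nat -> 'I_n -> R),
       (l2sq_agent owner i (fun k j => (x k j - x' k j)%R) <= ((b ^+ 2)%R)%:E)%E /\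
       r = l2sq_agent owner i (fun k j => c j * x k j - c j * x' k j)])).

From HB Require Import structures.
From mathcomp Require Import all_boot all_order all_algebra.
From mathcomp Require Import all_classical all_reals all_analysis.
From mathcomp Require Import measurable_realfun.
From mathcomp Require Import ring lra.
Import Order.TTheory GRing.Theory Num.Theory.
Import numFieldNormedType.Exports.

(* The Riccati equation writes Sigma - W as A P A^T, where P is the Schur complement
   Sigma - Sigma C^T (C Sigma C^T + V)^-1 C Sigma and hence positive semidefinite; so
   Sigma >= W >= lam I as quadratic forms.  The inverse of Sigmabar is therefore
   C^T V^-1 C + Sigma^-1 >= diag (d_j) with d_j = C_jj^2 / sigma_j^2, and its diagonal
   entries are at most d_j + 1/lam, which pins the diagonal of Sigmabar between
   1 / (d_j + 1/lam) and 1 / d_j, and its trace between n / (d_u + 1/lam) and n / d_l.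
   On the privacy side, delta in [1e-5, 1e-1] forces 1 <= K_delta <= 9/2 by elementary
   Gaussian tail estimates; the two bounds on eps then give eta3 Dy <= sigma <= eta4 Dy,
   which turn the two trace bounds into Bl and Bu. *)

Set Implicit Arguments.
Unset Strict Implicit.
Unset Printing Implicit Defensive.

Local Open Scope ring_scope.

Section MatrixForms.
Context {R : realFieldType} {n : nat}.
Implicit Types (M N P : 'M[R]_n) (x y v w : 'cV[R]_n).

Definition mxform M x y : R := (x^T *m M *m y) 0 0.

Definition sqnorm x : R := \sum_i x i 0 ^+ 2.

Lemma mxformE M x y : mxform M x y = \sum_i \sum_j x i 0 * M i j * y j 0.
Proof.
rewrite /mxform mxE exchange_big /=; apply: eq_bigr => j _.
by rewrite mxE big_distrl /=; apply: eq_bigr => i _; rewrite mxE.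
Qed.

Lemma mxformDl M x1 x2 y : mxform M (x1 + x2) y = mxform M x1 y + mxform M x2 y.
Proof. by rewrite /mxform linearD /= !mulmxDl mxE. Qed.

Lemma mxformDr M x y1 y2 : mxform M x (y1 + y2) = mxform M x y1 + mxform M x y2.
Proof. by rewrite /mxform !mulmxDr mxE. Qed.

Lemma mxformZl M a x y : mxform M (a *: x) y = a * mxform M x y.
Proof. by rewrite /mxform linearZ /= -!scalemxAl mxE. Qed.

Lemma mxformZr M a x y : mxform M x (a *: y) = a * mxform M x y.
Proof. by rewrite /mxform -!scalemxAr mxE. Qed.

Lemma mxformDM M N x y : mxform (M + N) x y = mxform M x y + mxform N x y.
Proof. by rewrite /mxform mulmxDr mulmxDl mxE. Qed.

Lemma mxformZM a M x y : mxform (a *: M) x y = a * mxform M x y.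
Proof. by rewrite /mxform -scalemxAr -scalemxAl mxE. Qed.

Lemma mxformBM M N x y : mxform (M - N) x y = mxform M x y - mxform N x y.
Proof. by rewrite mxformDM -scaleN1r mxformZM mulN1r. Qed.

Lemma mxform0l M y : mxform M 0 y = 0.
Proof. by rewrite /mxform linear0 !mul0mx mxE. Qed.

Lemma mxform_tr M x y : mxform M^T y x = mxform M x y.
Proof.
rewrite /mxform; transitivity ((x^T *m M *m y)^T 0 0); last by rewrite mxE.
by rewrite !trmx_mul trmxK mulmxA.
Qed.

Lemma mxform_sym M x y : M^T = M -> mxform M y x = mxform M x y.
Proof. by move=> MT; rewrite -[in LHS]MT mxform_tr. Qed.

Lemma mxform_mulmx M B D x y : mxform M (B *m x) (D *m y) = mxform (B^T *m M *m D) x y.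
Proof. by rewrite /mxform trmx_mul !mulmxA. Qed.

Lemma mxform_diag (d : 'I_n -> R) v :
  mxform (diag_mx (\row_k d k)) v v = \sum_k d k * v k 0 ^+ 2.
Proof.
rewrite mxformE; apply: eq_bigr => i _.
rewrite (bigD1 i) //= big1 ?addr0 => [|j /negbTE ji]; last first.
  by rewrite !mxE eq_sym ji mulr0n mulr0 mul0r.
by rewrite !mxE eqxx mulr1n; ring.
Qed.

Lemma mxform_scalar a v : mxform a%:M v v = a * sqnorm v.
Proof.
rewrite -diag_const_mx (_ : const_mx a = \row_k a); last by apply/rowP => k; rewrite !mxE.
by rewrite mxform_diag mulr_sumr.
Qed.

Lemma mxform_delta M j : mxform M (delta_mx j 0) (delta_mx j 0) = M j j.
Proof. by rewrite /mxform trmx_delta -rowE -colE !mxE. Qed.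

Lemma sqnorm0 : sqnorm 0 = 0.
Proof. by rewrite /sqnorm big1 // => i _; rewrite mxE expr0n. Qed.

Lemma sqnorm_ge0 x : 0 <= sqnorm x.
Proof. by apply: sumr_ge0 => i _; apply: sqr_ge0. Qed.

Lemma sqnorm_coord x i : x i 0 ^+ 2 <= sqnorm x.
Proof. by rewrite /sqnorm (bigD1 i) //= lerDl sumr_ge0 // => j _; apply: sqr_ge0. Qed.

Lemma wsum_sqr_gt0 (d : 'I_n -> R) v :
  (forall k, 0 < d k) -> v != 0 -> 0 < \sum_k d k * v k 0 ^+ 2.
Proof.
move=> d_gt0 v0; have [k vk0] : exists k, v k 0 != 0.
  case: (pickP (fun k => v k 0 != 0)) => [k vk0|v_eq0]; first by exists k.
  case/eqP: v0; apply/matrixP => i j; rewrite (ord1 j) mxE; exact/eqP/negbFE/v_eq0.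
rewrite (bigD1 k) //=; apply: ltr_wpDr.
  by apply: sumr_ge0 => i _; apply: mulr_ge0; [exact: ltW | exact: sqr_ge0].
by rewrite mulr_gt0 // exprn_even_gt0.
Qed.

Lemma sqnorm_gt0 x : x != 0 -> 0 < sqnorm x.
Proof.
move=> x0; rewrite /sqnorm (eq_bigr (fun i => 1 * x i 0 ^+ 2)) => [|i _]; last by rewrite mul1r.
exact: wsum_sqr_gt0.
Qed.

Lemma mxform_diag_gt0 (d : 'I_n -> R) :
  (forall k, 0 < d k) -> forall v, v != 0 -> 0 < mxform (diag_mx (\row_k d k)) v v.
Proof. by move=> d_gt0 v v0; rewrite mxform_diag wsum_sqr_gt0. Qed.

Lemma mxform_le_sumabs P w : mxform P w w <= (\sum_i \sum_j `|P i j|) * sqnorm w.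
Proof.
rewrite mxformE mulr_suml; apply: ler_sum => i _; rewrite mulr_suml.
apply: ler_sum => j _.
have wij : `|w i 0 * w j 0| <= sqnorm w.
  have := sqnorm_coord w i; have := sqnorm_coord w j.
  have := sqr_ge0 (`|w i 0| - `|w j 0|).
  rewrite normrM -(real_normK (num_real (w i 0))) -(real_normK (num_real (w j 0))).
  nra.
rewrite mulrAC (le_trans (ler_norm _)) // normrM mulrC ler_wpM2l //.
Qed.

Lemma mxform_CauchySchwarz M x y :
  M^T = M -> (forall v, 0 <= mxform M v v) ->
  mxform M x y ^+ 2 <= mxform M x x * mxform M y y.
Proof.
move=> MT M_psd.
have quad t : 0 <= mxform M x x + 2 * t * mxform M x y + t ^+ 2 * mxform M y y.
  have := M_psd (x + t *: y).
  rewrite mxformDl !mxformDr !mxformZl !mxformZr (mxform_sym x y MT).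
  by congr (_ <= _); ring.
have := M_psd x; have := M_psd y.
set a := mxform M x x; set b := mxform M x y; set c := mxform M y y.
move: quad; rewrite -/a -/b -/c => quad c_ge0 a_ge0.
have [c0|c_neq0] := eqVneq c 0.
  have [b0|b_neq0] := eqVneq b 0; first by rewrite b0 c0 expr0n mulr0.
  have := quad (- (a + 1) / (2 * b)); rewrite c0 mulr0 addr0.
  have -> : 2 * (- (a + 1) / (2 * b)) * b = - (a + 1) by field.
  lra.
have c_gt0 : 0 < c by rewrite lt_def c_neq0.
have := quad (- b / c).
have -> : a + 2 * (- b / c) * b + (- b / c) ^+ 2 * c = a - b ^+ 2 / c by field.
rewrite subr_ge0 ler_pdivrMr //; lra.
Qed.

End MatrixForms.

Section PositiveForms.
Context {R : realFieldType} {n : nat}.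
Implicit Types (M S C V : 'M[R]_n) (v w x y : 'cV[R]_n).

Lemma pd_psd M : (forall v, v != 0 -> 0 < mxform M v v) -> forall v, 0 <= mxform M v v.
Proof. by move=> M_pd v; have [->|/M_pd/ltW //] := eqVneq v 0; rewrite mxform0l. Qed.

Lemma pd_unitmx M : (forall v, v != 0 -> 0 < mxform M v v) -> M \in unitmx.
Proof.
move=> M_pd; rewrite -row_free_unit; apply: inj_row_free => v vM0.
apply/eqP/negPn/negP => v0.
have /M_pd : v^T != 0 by rewrite -(inj_eq (@trmx_inj _ _ _)) trmxK trmx0.
by rewrite /mxform trmxK vM0 mul0mx mxE ltxx.
Qed.

(* With w = M v: |v|^2 <= b |w|^2 by the entry bound for invmx M, and by
   Cauchy-Schwarz |w|^4 = (w^T M v)^2 <= (a |w|^2) (v^T M v). *)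
Lemma mxform_coercive M :
  M^T = M -> (forall v, 0 <= mxform M v v) -> M \in unitmx ->
  exists2 e, 0 < e & forall v, e * sqnorm v <= mxform M v v.
Proof.
move=> MT M_psd M_unit.
set a := \sum_i \sum_j `|M i j|; set b := \sum_i \sum_j `|(invmx M^T *m invmx M) i j|.
have a_ge0 : 0 <= a by do 2!apply: sumr_ge0 => ? _.
have b_ge0 : 0 <= b by do 2!apply: sumr_ge0 => ? _.
exists (a * b + 1)^-1; first by rewrite invr_gt0; nra.
move=> v; set w := M *m v.
have vb : sqnorm v <= b * sqnorm w.
  rewrite -[sqnorm v]mul1r -mxform_scalar -[v](mulKmx M_unit) -/w mxform_mulmx mulmx1.
  by rewrite trmx_inv; apply: mxform_le_sumabs.
have wMv : sqnorm w = mxform M w v.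
  by rewrite -[sqnorm w]mul1r -mxform_scalar /mxform /w mulmx1 mulmxA.
have wa : sqnorm w <= a * mxform M v v.
  have [w0|w_neq0] := eqVneq (sqnorm w) 0; first by rewrite w0 mulr_ge0.
  have w_gt0 : 0 < sqnorm w by rewrite lt_def w_neq0 sqnorm_ge0.
  rewrite -(ler_pM2l w_gt0); apply: le_trans (_ : mxform M w w * mxform M v v <= _).
    by rewrite -expr2 [X in X ^+ 2]wMv mxform_CauchySchwarz.
  by rewrite mulrA ler_wpM2r // mulrC mxform_le_sumabs.
have := M_psd v; have := sqnorm_ge0 w.
rewrite ler_pdivrMl; nra.
Qed.

Lemma eigenvalue_gt0 M a :
  (forall v, v != 0 -> 0 < mxform M v v) -> eigenvalue M a -> 0 < a.
Proof.
move=> M_pd /eigenvalueP [v vM v0].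
have vT0 : v^T != 0 by rewrite -(inj_eq (@trmx_inj _ _ _)) trmxK trmx0.
have := M_pd _ vT0; rewrite /mxform trmxK vM -scalemxAl mxE.
have -> : (v *m v^T) 0 0 = sqnorm v^T.
  by rewrite -[sqnorm _]mul1r -mxform_scalar /mxform trmxK mulmx1.
by rewrite pmulr_lgt0 // sqnorm_gt0.
Qed.

(* The form of the Schur complement at w is the (nonnegative) value of
   (w - C^T z)^T S (w - C^T z) + z^T V z at z = (C S C^T + V)^-1 C S w. *)
Lemma schur_complement_psd S C V :
  (forall v, 0 <= mxform S v v) -> (forall v, 0 <= mxform V v v) ->
  C *m S *m C^T + V \in unitmx ->
  forall w, 0 <= mxform (S - S *m C^T *m invmx (C *m S *m C^T + V) *m C *m S) w w.
Proof.
move=> S_psd V_psd G_unit w; set G := C *m S *m C^T + V.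
set z := invmx G *m (C *m S *m w).
have Gz : mxform (C *m S *m C^T) z z + mxform V z z = mxform S (C^T *m z) w.
  rewrite -mxformDM -/G /mxform [in RHS]trmx_mul trmxK -[z^T *m G *m z]mulmxA /z.
  by rewrite mulKVmx // !mulmxA.
have Schur : mxform (S *m C^T *m invmx G *m C *m S) w w = mxform S w (C^T *m z).
  by rewrite /mxform /z !mulmxA.
have CSC : mxform S (C^T *m z) (C^T *m z) = mxform (C *m S *m C^T) z z.
  by rewrite mxform_mulmx trmxK.
have := addr_ge0 (S_psd (w + (-1) *: (C^T *m z))) (V_psd z).
rewrite mxformBM Schur mxformDl !mxformDr !mxformZl !mxformZr CSC; lra.
Qed.

Lemma mxform_invmx M x y : M^T = M -> M \in unitmx ->
  mxform M (invmx M *m x) (invmx M *m y) = mxform (invmx M) x y.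
Proof. by move=> MT M_unit; rewrite mxform_mulmx trmx_inv MT mulVmx // mul1mx. Qed.

Lemma invmx_psd M : M^T = M -> M \in unitmx ->
  (forall v, 0 <= mxform M v v) -> forall v, 0 <= mxform (invmx M) v v.
Proof. by move=> MT M_unit M_psd v; rewrite -mxform_invmx. Qed.

Lemma invmx_diag_le M (d : 'I_n -> R) j :
  M^T = M -> (forall k, 0 < d k) ->
  (forall v, \sum_k d k * v k 0 ^+ 2 <= mxform M v v) -> invmx M j j <= (d j)^-1.
Proof.
move=> MT d_gt0 M_ge_d.
have M_unit : M \in unitmx.
  by apply: pd_unitmx => v v0; apply: lt_le_trans (M_ge_d v); apply: wsum_sqr_gt0.
pose x : 'cV[R]_n := invmx M *m delta_mx j 0.
have xj : x j 0 = invmx M j j by rewrite /x -colE mxE.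
have xMx : mxform M x x = invmx M j j by rewrite mxform_invmx // mxform_delta.
have dxj : d j * x j 0 ^+ 2 <= \sum_k d k * x k 0 ^+ 2.
  rewrite (bigD1 j) //= lerDl; apply: sumr_ge0 => k _.
  by apply: mulr_ge0; [exact: ltW | exact: sqr_ge0].
have := le_trans dxj (M_ge_d x); rewrite xMx xj => dB_le_B.
have dj := d_gt0 j; rewrite -(ler_pM2l dj) mulfV ?gt_eqF //; nra.
Qed.

Lemma invmx_diag_ge M j a :
  M^T = M -> (forall v, 0 <= mxform M v v) -> M \in unitmx -> 0 < a -> M j j <= a ->
  a^-1 <= invmx M j j.
Proof.
move=> MT M_psd M_unit a_gt0 Mjj_le.
set e : 'cV[R]_n := delta_mx j 0; set x := invmx M *m e.
have xMx : mxform M x x = invmx M j j by rewrite mxform_invmx // mxform_delta.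
have xMe : mxform M x e = 1.
  rewrite /x -[e in mxform M _ e]mul1mx mxform_mulmx trmx_inv MT mulmx1 mulVmx //.
  by rewrite mxform_delta mxE eqxx.
have := mxform_CauchySchwarz x e MT M_psd.
rewrite xMe xMx mxform_delta expr1n => CS.
have := M_psd x; rewrite xMx => Bjj_ge0.
rewrite -(ler_pM2l a_gt0) mulfV ?gt_eqF //; nra.
Qed.

Lemma invmx_diag (s : 'I_n -> R) : (forall j, s j != 0) ->
  invmx (diag_mx (\row_j s j)) = diag_mx (\row_j (s j)^-1).
Proof.
move=> s_neq0.
have sV : diag_mx (\row_j s j) *m diag_mx (\row_j (s j)^-1) = 1%:M.
  rewrite mulmx_diag -diag_const_mx; congr diag_mx; apply/rowP => j.
  by rewrite !mxE mulfV.
have [s_unit _] := mulmx1_unit sV.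
by rewrite -[RHS]mul1mx -(mulVmx s_unit) -mulmxA sV mulmx1.
Qed.

End PositiveForms.

Section MinEigenvalue.
Context {R : realType} {n : nat}.
Local Open Scope classical_set_scope.

(* The infimum mu of the Rayleigh quotient is an eigenvalue: otherwise
   M - mu I would be invertible and psd, hence coercive, raising the infimum. *)
Lemma min_eigenvalue_le_mxform (M : 'M[R]_n) lam :
  M^T = M -> (forall v, 0 <= mxform M v v) ->
  (forall a, eigenvalue M a -> lam <= a) ->
  forall v, lam * sqnorm v <= mxform M v v.
Proof.
move=> MT M_psd lam_min v.
have [->|v0] := eqVneq v 0; first by rewrite mxform0l sqnorm0 mulr0.
pose S := [set r : R | exists2 w : 'cV[R]_n, w != 0 & r = mxform M w w / sqnorm w].
have S_lb : has_lbound S.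
  by exists 0 => r [w _ ->]; apply: divr_ge0; [exact: M_psd | exact: sqnorm_ge0].
have S_v : S (mxform M v v / sqnorm v) by exists v.
set mu := inf S.
have mu_le w : mu * sqnorm w <= mxform M w w.
  have [->|w0] := eqVneq w 0; first by rewrite mxform0l sqnorm0 mulr0.
  have S_w : S (mxform M w w / sqnorm w) by exists w.
  by rewrite -ler_pdivlMr ?sqnorm_gt0 // ge_inf.
pose N := M - mu%:M.
have N_sym : N^T = N by rewrite linearB /= tr_scalar_mx MT.
have N_psd w : 0 <= mxform N w w by rewrite mxformBM mxform_scalar subr_ge0.
have N_sing : N \notin unitmx.
  apply/negP => /(mxform_coercive N_sym N_psd) [e e_gt0 N_coer].
  suff : mu + e <= mu by lra.
  apply: lb_le_inf; first by exists (mxform M v v / sqnorm v).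
  move=> r [w w0 ->]; rewrite ler_pdivlMr ?sqnorm_gt0 //.
  by have := N_coer w; rewrite mxformBM mxform_scalar; lra.
have mu_eig : eigenvalue M mu.
  by rewrite /eigenvalue /eigenspace kermx_eq0 row_free_unit.
by apply: le_trans (mu_le v); rewrite ler_wpM2r ?sqnorm_ge0 ?lam_min.
Qed.

End MinEigenvalue.

Section Posterior.
Context {R : realFieldType} {n : nat}.

Lemma riccati_ge (A W S C V : 'M[R]_n) :
  (forall v, 0 <= mxform S v v) -> (forall v, v != 0 -> 0 < mxform V v v) ->
  S = A *m S *m A^T - A *m S *m C^T *m invmx (C *m S *m C^T + V) *m C *m S *m A^T + W ->
  forall v, mxform W v v <= mxform S v v.
Proof.
move=> S_psd V_pd ric v.
have G_unit : C *m S *m C^T + V \in unitmx.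
  apply: pd_unitmx => z z0; rewrite mxformDM; apply: ltr_wpDl (V_pd z z0).
  by have := S_psd (C^T *m z); rewrite mxform_mulmx trmxK.
rewrite -subr_ge0 -mxformBM.
have -> : S - W = A *m (S - S *m C^T *m invmx (C *m S *m C^T + V) *m C *m S) *m A^T.
  by rewrite {1}ric addrK mulmxBr mulmxBl !mulmxA.
have := schur_complement_psd S_psd (pd_psd V_pd) G_unit (A^T *m v).
by rewrite mxform_mulmx trmxK.
Qed.

Lemma posterior_diag_bounds (S : 'M[R]_n) (d : 'I_n -> R) lam j :
  S^T = S -> 0 < lam -> (forall v, lam * sqnorm v <= mxform S v v) ->
  (forall k, 0 < d k) ->
  (d j + lam^-1)^-1 <= invmx (diag_mx (\row_k d k) + invmx S) j j <= (d j)^-1.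
Proof.
move=> ST lam_gt0 S_ge d_gt0.
have S_pd v : v != 0 -> 0 < mxform S v v.
  by move=> v0; apply: lt_le_trans (S_ge v); rewrite mulr_gt0 ?sqnorm_gt0.
have S_unit := pd_unitmx S_pd.
have Sinv_jj : invmx S j j <= lam^-1.
  apply: (invmx_diag_le j ST (fun=> lam_gt0)) => v.
  by rewrite -mulr_sumr; apply: S_ge.
set M := diag_mx (\row_k d k) + invmx S.
have MT : M^T = M by rewrite linearD /= tr_diag_mx trmx_inv ST.
have M_ge (v : 'cV[R]_n) : \sum_k d k * v k 0 ^+ 2 <= mxform M v v.
  by rewrite mxformDM mxform_diag lerDl (invmx_psd ST S_unit (pd_psd S_pd)).
have M_pd v : v != 0 -> 0 < mxform M v v.
  by move=> v0; apply: lt_le_trans (M_ge v); apply: wsum_sqr_gt0.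
apply/andP; split; last exact: invmx_diag_le.
apply: invmx_diag_ge; rewrite ?pd_unitmx ?addr_gt0 ?invr_gt0 //; first exact: pd_psd.
by rewrite /M !mxE eqxx mulr1n lerD2l.
Qed.

Lemma diag_invmx_diag (c s : 'I_n -> R) : (forall j, s j != 0) ->
  (diag_mx (\row_j c j))^T *m invmx (diag_mx (\row_j s j)) *m diag_mx (\row_j c j)
  = diag_mx (\row_j (c j ^+ 2 / s j)).
Proof.
move=> s_neq0; rewrite tr_diag_mx invmx_diag // !mulmx_diag.
by congr diag_mx; apply/rowP => j; rewrite !mxE expr2 mulrAC.
Qed.

Lemma mxtrace_bounds (M : 'M[R]_n) a b :
  (forall j, a <= M j j <= b) -> n%:R * a <= \tr M <= n%:R * b.
Proof.
have sum_const x : \sum_(j < n) x = n%:R * x by rewrite sumr_const card_ord mulr_natl.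
move=> M_bnd; rewrite -!sum_const; apply/andP.
by split; apply: ler_sum => j _; case/andP: (M_bnd j).
Qed.

End Posterior.

Lemma posterior_trace_bounds {R : realType} {n : nat} (A W S : 'M[R]_n)
    (c s2 : 'I_n -> R) lam (l u : 'I_n) :
  W^T = W -> (forall v, v != 0 -> 0 < mxform W v v) ->
  (forall j, 0 < c j) -> (forall j, 0 < s2 j) ->
  S^T = S -> (forall v, 0 <= mxform S v v) ->
  let C := diag_mx (\row_j c j) in
  let V := diag_mx (\row_j s2 j) in
  S = A *m S *m A^T - A *m S *m C^T *m invmx (C *m S *m C^T + V) *m C *m S *m A^T + W ->
  is_min_eigenvalue W lam ->
  (forall j, c l ^+ 2 / s2 l <= c j ^+ 2 / s2 j) ->
  (forall j, c j ^+ 2 / s2 j <= c u ^+ 2 / s2 u) ->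
  n%:R * (c u ^+ 2 / s2 u + lam^-1)^-1 <= \tr (invmx (C^T *m invmx V *m C + invmx S))
    <= n%:R * (c l ^+ 2 / s2 l)^-1.
Proof.
move=> WT W_pd c_gt0 s2_gt0 ST S_psd C V ric [lam_eig lam_min] d_ge_l d_le_u.
have lam_gt0 := eigenvalue_gt0 W_pd lam_eig.
have S_ge v : lam * sqnorm v <= mxform S v v.
  apply: le_trans (min_eigenvalue_le_mxform WT (pd_psd W_pd) lam_min v) _.
  exact: riccati_ge S_psd (mxform_diag_gt0 s2_gt0) ric v.
have d_gt0 j : 0 < c j ^+ 2 / s2 j by rewrite divr_gt0 ?exprn_gt0.
rewrite diag_invmx_diag => [|j]; last by rewrite gt_eqF.
apply: mxtrace_bounds => j.
have /andP[lo hi] := posterior_diag_bounds j ST lam_gt0 S_ge d_gt0.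
apply/andP; split.
  by apply: le_trans lo; rewrite lef_pV2 ?posrE ?addr_gt0 ?invr_gt0 // lerD2r.
by apply: le_trans hi _; rewrite lef_pV2 ?posrE.
Qed.

Section GaussianTail.
Context {R : realType}.
Local Open Scope classical_set_scope.
Notation mu := (@lebesgue_measure R).
Implicit Types x z K : R.

Definition gaussian (z : R) : R := expR (- (z ^+ 2) / 2).

Lemma gaussian_ge0 z : 0 <= gaussian z.
Proof. exact: expR_ge0. Qed.

Lemma is_derive_gaussian x : is_derive x 1 gaussian (- x * gaussian x).
Proof.
have sq : is_derive x 1 (fun z : R => - (z ^+ 2) / 2) (- x).
  have -> : (fun z : R => - (z ^+ 2) / 2) = (- 2^-1) *: (@id R ^+ 2).
    by apply/funext => z; rewrite !fctE -[_ *: _]/(_ * _); ring.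
  by apply: is_derive_eq; change (- 2^-1 * ((2 * x ^+ 1) * 1) = - x); rewrite expr1; field.
have := is_derive1_comp (is_derive_expR _) sq.
by move/is_derive_eq; apply; rewrite mulrC.
Qed.

Lemma derivable_gaussian x : derivable gaussian x 1.
Proof. by have [] := is_derive_gaussian x. Qed.

Lemma gaussian_cvg0 : gaussian x @[x --> +oo] --> 0.
Proof.
have -> : gaussian = (fun y => expR (- y)) \o (fun x => x ^+ 2 * 2^-1).
  by apply/funext => z; rewrite /gaussian /= mulNr.
apply: (cvg_comp (fun x : R => x ^+ 2 * 2^-1) (fun y => expR (- y))); last exact: cvgr_expR.
by apply: gt0_cvgMly; [rewrite invr_gt0 | exact: cvgr_expr2].
Qed.

Lemma derivable_continuous (f : R -> R) : (forall x, derivable f x 1) -> continuous f.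
Proof. by move=> df x; apply/differentiable_continuous/derivable1_diffP. Qed.

Lemma derivable_measurable (f : R -> R) (D : set R) :
  (forall x, derivable f x 1) -> measurable_fun D (fun x => (f x)%:E).
Proof.
move=> df; apply/measurable_EFinP/measurable_funTS.
by apply: continuous_measurable_fun; apply: derivable_continuous.
Qed.

(* On [K, +oo), gaussian <= (z / K) gaussian, whose primitive is - gaussian / K. *)
Lemma gaussian_tail_le (K : R) : 0 < K ->
  (\int[mu]_(z in `[K, +oo[) (gaussian z)%:E <= (gaussian K / K)%:E)%E.
Proof.
move=> K_gt0.
pose f z := z / K * gaussian z; pose F z := - K^-1 * gaussian z.
have dF x : is_derive x 1 F (f x).
  have := is_deriveZ (- K^-1) (is_derive_gaussian x).
  by move/is_derive_eq; apply; rewrite /f -[_ *: _]/(_ * _); ring.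
have df x : derivable f x 1.
  have -> : f = (K^-1 \*: id) * gaussian.
    by apply/funext => z; change (z / K * gaussian z = K^-1 * z * gaussian z); ring.
  by apply: derivableM; [apply/derivableZ/derivable_id | exact: derivable_gaussian].
have dFF x : derivable F x 1 by have [] := dF x.
apply: (@le_trans _ _ (\int[mu]_(z in `[K, +oo[) (f z)%:E)%E).
  apply: ge0_le_integral => //.
  - by move=> x _; rewrite lee_fin gaussian_ge0.
  - exact: derivable_measurable derivable_gaussian.
  - exact: derivable_measurable df.
  - move=> x; rewrite /= in_itv /= andbT => Kx; rewrite lee_fin /f.
    by rewrite ler_peMl ?gaussian_ge0 // ler_pdivlMr // mul1r.
rewrite (@ge0_continuous_FTC2y R f F K 0).
- by rewrite sub0e -EFinN lee_fin /F mulNr opprK mulrC.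
- move=> x Kx; rewrite /f mulr_ge0 ?gaussian_ge0 // divr_ge0 ?(ltW K_gt0) //.
  exact: le_trans (ltW K_gt0) Kx.
- exact/continuous_subspaceT/derivable_continuous.
- by rewrite -(mulr0 (- K^-1)); apply: cvgMr; exact: gaussian_cvg0.
- by move=> x _; apply: dFF.
- exact/cvg_at_right_filter/derivable_continuous.
- by move=> x _; rewrite derive1E; have [_ ->] := dF x.
Qed.

(* (z/2 - 1) gaussian is a primitive of f := (1/2 + z - z^2/2) gaussian,
   and 0 <= f <= gaussian on [1, 2]. *)
Lemma gaussian_tail_ge (K : R) : K <= 1 ->
  ((gaussian 1 / 2)%:E <= \int[mu]_(z in `[K, +oo[) (gaussian z)%:E)%E.
Proof.
move=> K_le1.
pose f z := gaussian z * (2^-1 + z - z ^+ 2 / 2); pose F z := (z / 2 - 1) * gaussian z.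
have dF x : is_derive x 1 F (f x).
  have -> : F = ((2^-1 \*: id) - cst 1) * gaussian.
    by apply/funext => z; change ((z / 2 - 1) * gaussian z = (2^-1 * z - 1) * gaussian z); ring.
  have dlin := is_deriveB (is_deriveZ 2^-1 (is_derive_id x (1 : R))) (is_derive_cst (1 : R) x 1).
  have := is_deriveM dlin (is_derive_gaussian x); move/is_derive_eq; apply.
  rewrite /f; change ((2^-1 * x - 1) * (- x * gaussian x) + gaussian x * (2^-1 * 1 - 0) =
    gaussian x * (2^-1 + x - x ^+ 2 / 2)); ring.
have df x : derivable f x 1.
  have -> : f = gaussian * (cst 2^-1 + id - (2^-1 \*: (@id R ^+ 2))).
    apply/funext => z; change (gaussian z * (2^-1 + z - z ^+ 2 / 2) =
      gaussian z * (2^-1 + z - 2^-1 * z ^+ 2)); ring.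
  apply: derivableM; first exact: derivable_gaussian.
  apply: derivableB; first exact/derivableD/derivable_id/derivable_cst.
  exact/derivableZ/derivableX/derivable_id.
have dFF x : derivable F x 1 by have [] := dF x.
have cF : continuous F by apply: derivable_continuous.
have f_bnd x : 1 <= x <= 2 -> 0 <= f x <= gaussian x.
  move=> /andP[x1 x2]; rewrite /f; have g0 := gaussian_ge0 x; apply/andP; split.
    by apply: mulr_ge0 => //; nra.
  by rewrite ler_piMr //; nra.
have intf : (\int[mu]_(z in `[1%R, 2%R]) (f z)%:E = (F 2)%:E - (F 1)%:E)%E.
  apply: continuous_FTC2; first lra.
  - exact/continuous_subspaceT/derivable_continuous.
  - split; first by move=> x _; apply: dFF.
      exact/cvg_at_right_filter/cF.
    exact/cvg_at_left_filter/cF.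
  - by move=> x _; rewrite derive1E; have [_ ->] := dF x.
apply: (@le_trans _ _ (\int[mu]_(z in `[1%R, 2%R]) (gaussian z)%:E)%E); last first.
  apply: ge0_subset_integral => //.
  - exact: derivable_measurable derivable_gaussian.
  - by move=> x _; rewrite lee_fin gaussian_ge0.
  - by move=> x; rewrite /= !in_itv /= andbT => /andP[x1 _]; exact: le_trans K_le1 x1.
apply: (@le_trans _ _ (\int[mu]_(z in `[1%R, 2%R]) (f z)%:E)%E).
  by rewrite intf -EFinB lee_fin /F; lra.
apply: ge0_le_integral => //.
- by move=> x; rewrite /= in_itv /= => /f_bnd /andP[+ _]; rewrite lee_fin.
- exact: derivable_measurable df.
- exact: derivable_measurable derivable_gaussian.
- by move=> x; rewrite /= in_itv /= => /f_bnd /andP[_ +]; rewrite lee_fin.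
Qed.

Lemma Qfun_tail K : (Qfun K)%:E =
  (((Num.sqrt (2 * pi))^-1)%:E * \int[mu]_(z in `[K, +oo[) (gaussian z)%:E)%E.
Proof.
set I := (\int[mu]_(z in `[K, +oo[) (gaussian z)%:E)%E.
set c := (Num.sqrt (2 * pi))^-1.
have c_gt0 : 0 < c by rewrite invr_gt0 sqrtr_gt0 mulr_gt0 ?pi_gt0.
have I_ge0 : (0 <= I)%E by apply: integral_ge0 => z _; rewrite lee_fin gaussian_ge0.
have tailE : normal_prob 0 1 `[K, +oo[ = (c%:E * I)%E.
  rewrite /normal_prob (normal_pdfE _ (oner_neq0 R)) /I -ge0_integralZl_EFin ?(ltW c_gt0);
    last by [].
  - apply: eq_integral => z _; rewrite /normal_peak /normal_fun subr0 expr1n mul1r.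
    by rewrite -EFinM /c -mulr_natl.
  - exact: measurable_itv.
  - by move=> z _; rewrite lee_fin gaussian_ge0.
  - exact: derivable_measurable derivable_gaussian.
(* The tail integral is finite because normal_prob 0 1 is a probability. *)
have I_fin : I \is a fin_num.
  rewrite ge0_fin_numE // ltNge leye_eq; apply/negP => /eqP I_inf.
  have K_meas : measurable `[K, +oo[%classic by exact: measurable_itv.
  have := probability_le1 (normal_prob 0 1) K_meas.
  by rewrite /= tailE I_inf mulry gtr0_sg // mul1e leNgt ltry.
by rewrite /Qfun -/I -[in RHS](fineK I_fin) -EFinM.
Qed.

Lemma sqrt_2pi_bounds : 2 <= Num.sqrt (2 * @pi R) < 283 / 100.
Proof.
have pi_ge2 : 2 <= pi :> R := @pi_ge2 R.
have pi_lt4 : pi < 4 :> R by have := @pihalf_lt2 R; lra.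
set s := Num.sqrt (2 * pi); have s_ge0 : 0 <= s := sqrtr_ge0 _.
have s2 : s ^+ 2 = 2 * pi by rewrite sqr_sqrtr //; lra.
apply/andP; split; first by rewrite leNgt; apply/negP => h; nra.
by rewrite ltNge; apply/negP => h; nra.
Qed.

Lemma Qfun_gt_tenth K : K <= 1 -> 10 ^- 1 < Qfun K.
Proof.
move=> K_le1; have /andP[s_ge2 s_lt] := sqrt_2pi_bounds.
have g1 : 2401 / 4096 <= gaussian 1.
  have e_ge : 7 / 8 <= expR (- 8^-1) :> R by apply: le_trans (expR_ge1Dx _); lra.
  apply: (@le_trans _ _ (expR (- 8^-1) ^+ 4)).
    apply: le_trans (_ : (7 / 8) ^+ 4 <= _); first by rewrite !exprS expr0; lra.
    by apply: lerXn2r; rewrite ?nnegrE; [lra | exact: expR_ge0 | ].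
  by rewrite -expRM_natl /gaussian ler_expR; lra.
have : (((Num.sqrt (2 * pi))^-1 * (gaussian 1 / 2))%:E <= (Qfun K)%:E)%E.
  by rewrite Qfun_tail EFinM lee_pmul2l ?gaussian_tail_ge ?lte_fin ?invr_gt0 //; lra.
rewrite lee_fin; apply: lt_le_trans.
by rewrite expr1 mulrC ltr_pdivlMr; lra.
Qed.

Lemma expR_81_8_ge : 11112 <= expR (81 / 8) :> R.
Proof.
have -> : 81 / 8 = 128%:R * (81 / 1024) :> R by lra.
rewrite expRM_natl; apply: (@le_trans _ _ ((1105 / 1024) ^+ 128)); first lra.
apply: lerXn2r; rewrite ?nnegrE; [lra | exact: expR_ge0 | ].
by apply: le_trans (expR_ge1Dx _); lra.
Qed.

Lemma Qfun_lt K : 9 / 2 < K -> Qfun K < 10 ^- 5.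
Proof.
move=> K_gt; have K_gt0 : 0 < K by lra.
have /andP[s_ge2 _] := sqrt_2pi_bounds.
have : ((Qfun K)%:E <= ((Num.sqrt (2 * pi))^-1 * (gaussian K / K))%:E)%E.
  by rewrite Qfun_tail EFinM lee_pmul2l ?gaussian_tail_le ?lte_fin ?invr_gt0 //; lra.
rewrite lee_fin => /le_lt_trans; apply.
have s_inv : (Num.sqrt (2 * pi))^-1 <= 2^-1 :> R by rewrite lef_pV2 ?posrE; lra.
have gK : gaussian K <= 11112^-1.
  apply: (@le_trans _ _ (expR (- (81 / 8)))); first by rewrite ler_expR; nra.
  by rewrite expRN lef_pV2 ?posrE ?expR_gt0; [exact: expR_81_8_ge | | lra].
have gK_K : gaussian K / K <= 2 / (9 * 11112) by rewrite ler_pdivrMr; lra.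
apply: le_lt_trans (ler_pM _ _ s_inv gK_K) _.
- by rewrite invr_ge0 sqrtr_ge0.
- by rewrite divr_ge0 ?gaussian_ge0 ?(ltW K_gt0).
- by rewrite -exprVn; lra.
Qed.

Lemma Qfun_inv_bounds K : 10 ^- 5 <= Qfun K <= 10 ^- 1 -> 1 <= K <= 9 / 2.
Proof.
move=> /andP[Q_ge Q_le]; apply/andP; split; rewrite leNgt; apply/negP.
  by move=> /ltW /Qfun_gt_tenth; rewrite ltNge Q_le.
by move=> /Qfun_lt; rewrite ltNge Q_ge.
Qed.

End GaussianTail.

Section NoiseLevel.
Context {R : rcfType}.
Implicit Types D e K g h m c s lam : R.

Definition noise_std D e K : R := D / (2 * e) * (K + Num.sqrt (K ^+ 2 + 2 * e)).

Lemma noise_std_gt0 D e K : 0 < D -> 0 < e -> 0 <= K -> 0 < noise_std D e K.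
Proof.
move=> D_gt0 e_gt0 K_ge0; rewrite /noise_std mulr_gt0 ?divr_gt0 ?mulr_gt0 //.
by rewrite ltr_wpDl // sqrtr_gt0; nra.
Qed.

Lemma noise_std_ge D e K g : 0 < D -> 0 < e -> 1 <= K -> 0 < g -> e <= g^-1 ->
  g * D <= noise_std D e K.
Proof.
move=> D_gt0 e_gt0 K_ge1 g_gt0 e_le; set t := Num.sqrt (K ^+ 2 + 2 * e).
have t_ge0 : 0 <= t := sqrtr_ge0 _.
have t2 : t ^+ 2 = K ^+ 2 + 2 * e by rewrite sqr_sqrtr //; nra.
have t_ge_K : K <= t by rewrite leNgt; apply/negP => t_lt; nra.
have eg_le1 : e * g <= 1 by have := ler_wpM2r (ltW g_gt0) e_le; rewrite mulVf ?gt_eqF.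
rewrite /noise_std -/t mulrAC ler_pdivlMr; nra.
Qed.

(* 36 = 8 * 9/2: the hypothesis on e gives 2 e h^2 >= 1 + 9 h >= 1 + 2 h K, which
   is what K + sqrt (K^2 + 2 e) <= 2 e h amounts to after squaring. *)
Lemma noise_std_le D e K h : 0 < D -> 0 < e -> 1 <= K <= 9 / 2 -> 0 < h ->
  8^-1 * ((1 + Num.sqrt (36 * h + 1)) / h) ^+ 2 <= e -> noise_std D e K <= h * D.
Proof.
move=> D_gt0 e_gt0 /andP[K_ge1 K_le] h_gt0 e_ge.
set r := Num.sqrt (36 * h + 1); set t := Num.sqrt (K ^+ 2 + 2 * e).
have r_ge0 : 0 <= r := sqrtr_ge0 _.
have r2 : r ^+ 2 = 36 * h + 1 by rewrite sqr_sqrtr //; lra.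
have r_ge1 : 1 <= r by rewrite leNgt; apply/negP => r_lt; nra.
have t_ge0 : 0 <= t := sqrtr_ge0 _.
have t2 : t ^+ 2 = K ^+ 2 + 2 * e by rewrite sqr_sqrtr //; nra.
have eh2 : (1 + r) ^+ 2 <= 8 * e * h ^+ 2.
  move: e_ge; rewrite -/r expr_div_n mulrA ler_pdivrMr ?exprn_gt0 //; lra.
have eh2' : 1 + 2 * h * K <= 2 * e * h ^+ 2 by nra.
have t_le : t <= 2 * e * h - K.
  rewrite -(ler_pXn2r (_ : 0 < 2)%N) ?nnegrE //; last by nra.
  by rewrite t2; nra.
rewrite /noise_std -/t mulrAC ler_pdivrMr; nra.
Qed.

Lemma Bl_le_trace_lb m Bl c D s lam :
  0 < m -> 0 < c -> 0 < D -> 0 < lam -> 0 < s ->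
  0 < Bl * c ^+ 2 / (D ^+ 2 * (m - Bl * lam^-1)) ->
  Num.sqrt (Bl * c ^+ 2 / (D ^+ 2 * (m - Bl * lam^-1))) * D <= s ->
  Bl <= m * (c ^+ 2 / s ^+ 2 + lam^-1)^-1.
Proof.
move=> m_gt0 c_gt0 D_gt0 lam_gt0 s_gt0.
set w := m - Bl * lam^-1; set q := Bl * c ^+ 2 / (D ^+ 2 * w) => q_gt0 s_ge.
have c2_gt0 : 0 < c ^+ 2 by rewrite exprn_gt0.
have D2_gt0 : 0 < D ^+ 2 by rewrite exprn_gt0.
have lamV_gt0 : 0 < lam^-1 by rewrite invr_gt0.
have Bl_gt0 : 0 < Bl.
  rewrite ltNge; apply/negP => Bl_le0; move: q_gt0; rewrite ltNge => /negP; apply.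
  rewrite /q; apply: mulr_le0_ge0; first by rewrite mulr_le0_ge0 ?(ltW c2_gt0).
  by rewrite invr_ge0 mulr_ge0 ?(ltW D2_gt0) // /w; nra.
have w_gt0 : 0 < w.
  rewrite ltNge; apply/negP => w_le0; move: q_gt0; rewrite ltNge => /negP; apply.
  rewrite /q; apply: mulr_ge0_le0; first by rewrite mulr_ge0 ?(ltW Bl_gt0) ?(ltW c2_gt0).
  by rewrite invr_le0 mulr_ge0_le0 ?(ltW D2_gt0).
have : q * D ^+ 2 <= s ^+ 2.
  rewrite -(sqr_sqrtr (ltW q_gt0)) -exprMn; apply: lerXn2r; rewrite ?nnegrE //.
    by rewrite mulr_ge0 ?sqrtr_ge0 ?(ltW D_gt0).
  exact: ltW.
have -> : q * D ^+ 2 = Bl * c ^+ 2 / w by rewrite /q; field; rewrite !gt_eqF.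
rewrite ler_pdivrMr // => Bc_le.
rewrite ler_pdivlMr ?addr_gt0 ?divr_gt0 ?exprn_gt0 // mulrDr.
have : Bl * (c ^+ 2 / s ^+ 2) <= w by rewrite mulrA ler_pdivrMr ?exprn_gt0 //; lra.
rewrite /w; lra.
Qed.

Lemma trace_ub_le_Bu m Bu c D s : 0 < m -> 0 < c -> 0 < D -> 0 < s ->
  0 < Bu * c ^+ 2 / (m * D ^+ 2) ->
  s <= Num.sqrt (Bu * c ^+ 2 / (m * D ^+ 2)) * D ->
  m * (c ^+ 2 / s ^+ 2)^-1 <= Bu.
Proof.
move=> m_gt0 c_gt0 D_gt0 s_gt0; set q := Bu * c ^+ 2 / (m * D ^+ 2) => q_gt0 s_le.
have : s ^+ 2 <= q * D ^+ 2.
  rewrite -(sqr_sqrtr (ltW q_gt0)) -exprMn; apply: lerXn2r; rewrite ?nnegrE //.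
    exact: ltW.
  by rewrite mulr_ge0 ?sqrtr_ge0 ?(ltW D_gt0).
have -> : q * D ^+ 2 = Bu * c ^+ 2 / m by rewrite /q; field; rewrite !gt_eqF.
rewrite ler_pdivlMr // => s2_le.
by rewrite invf_div mulrA ler_pdivrMr ?exprn_gt0 //; lra.
Qed.

End NoiseLevel.

Theorem theorem8 (R : realType) (n N : nat) (owner : 'I_n -> 'I_N)
  (A W : 'M[R]_n) (c : 'I_n -> R) (b : 'I_N -> R)
  (delta eps K : 'I_N -> R) (Sigma : 'M[R]_n) (lam Bl Bu : R) (l u : 'I_n) :
  pd W ->
  (forall j, 0 < c j) ->
  (forall i, 0 < b i) ->
  (forall i, 0 < sensitivity owner c (b i) i) ->
  (forall i, 10 ^- 5 <= delta i <= 10 ^- 1) ->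
  (forall i, 0 < eps i) ->
  (forall i, Qfun (K i) = delta i) ->
  let C : 'M[R]_n := diag_mx (\row_j c j) in
  let Dy i := sensitivity owner c (b i) i in
  let sigma i := Dy i / (2 * eps i) * (K i + Num.sqrt (K i ^+ 2 + 2 * eps i)) in
  let sig2 j := sigma (owner j) ^+ 2 in
  let V : 'M[R]_n := diag_mx (\row_j sig2 j) in
  psd Sigma ->
  Sigma = A *m Sigma *m A^T
          - A *m Sigma *m C^T *m invmx (C *m Sigma *m C^T + V) *m C *m Sigma *m A^T
          + W ->
  let Sigmabar := invmx (C^T *m invmx V *m C + invmx Sigma) in
  is_min_eigenvalue W lam ->
  (forall j, c l ^+ 2 / sig2 l <= c j ^+ 2 / sig2 j) ->
  (forall j, c j ^+ 2 / sig2 j <= c u ^+ 2 / sig2 u) ->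
  let eta3sq i := Bl * c u ^+ 2 / (Dy i ^+ 2 * (n%:R - Bl * lam^-1)) in
  let eta4sq i := Bu * c l ^+ 2 / (n%:R * Dy i ^+ 2) in
  (forall i, 0 < eta3sq i) ->
  (forall i, 0 < eta4sq i) ->
  let eta3 i := Num.sqrt (eta3sq i) in
  let eta4 i := Num.sqrt (eta4sq i) in
  (forall i, 8^-1 * ((1 + Num.sqrt (36 * eta4 i + 1)) / eta4 i) ^+ 2 <= eps i
             <= (eta3 i)^-1) ->
  Bl <= \tr Sigmabar <= Bu.
Proof.
move=> [WT W_pd] c_gt0 _ Dy_gt0 delta_bnd eps_gt0 QK C Dy sigma sig2 V [ST S_psd] ric
  Sb lam_min d_ge_l d_le_u eta3sq eta4sq eta3sq_gt0 eta4sq_gt0 eta3 eta4 eps_bnd.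
have K_bnd i : 1 <= K i <= 9 / 2 by apply: Qfun_inv_bounds; rewrite QK.
have sigma_gt0 i : 0 < sigma i.
  have /andP[K_ge1 _] := K_bnd i.
  by apply: noise_std_gt0; rewrite ?Dy_gt0 ?eps_gt0 ?(le_trans ler01 K_ge1).
have sig2_gt0 j : 0 < sig2 j by rewrite exprn_gt0.
have n_gt0 : 0 < n%:R :> R by rewrite ltr0n (leq_ltn_trans (leq0n l) (ltn_ord l)).
have lam_gt0 : 0 < lam := eigenvalue_gt0 W_pd lam_min.1.
have /andP[tr_lb tr_ub] :=
  posterior_trace_bounds WT W_pd c_gt0 sig2_gt0 ST S_psd ric lam_min d_ge_l d_le_u.
apply/andP; split; [apply: le_trans tr_lb | apply: le_trans tr_ub _].
- have /andP[_ eps_le] := eps_bnd (owner u); have /andP[K_ge1 _] := K_bnd (owner u).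
  apply: Bl_le_trace_lb n_gt0 (c_gt0 u) (Dy_gt0 _) lam_gt0 (sigma_gt0 _) (eta3sq_gt0 _) _.
  by apply: noise_std_ge (Dy_gt0 _) (eps_gt0 _) K_ge1 _ eps_le; rewrite sqrtr_gt0.
- have /andP[eps_ge _] := eps_bnd (owner l).
  apply: trace_ub_le_Bu n_gt0 (c_gt0 l) (Dy_gt0 _) (sigma_gt0 _) (eta4sq_gt0 _) _.
  by apply: noise_std_le (Dy_gt0 _) (eps_gt0 _) (K_bnd _) _ eps_ge; rewrite sqrtr_gt0.
Qed.
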